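(* In the GLM setting of the context, assume Conditions (C1)–(C2). Define, for $\lambda\ge0$, the asymptotic mean squared error $$\mathrm{aMSE}(\lambda)=d(\gamma_2)\,\mathrm{trace}\{\boldsymbol s^{-2}(\boldsymbol\beta_2;\lambda)\boldsymbol v_2(\boldsymbol\beta_2)\}+n_2\lambda^2n_1^{-2}\,\boldsymbol\Delta(\boldsymbol\beta_2)^\top\boldsymbol X_1^\top\boldsymbol s^{-2}(\boldsymbol\beta_2;\lambda)\boldsymbol X_1\boldsymbol\Delta(\boldsymbol\beta_2),$$ where $\boldsymbol s(\boldsymbol\beta;\lambda)=\boldsymbol v_2(\boldsymbol\beta)+\lambda\boldsymbol v_1(\boldsymbol\beta)$, so that $\mathrm{aMSE}(0)=d(\gamma_2)\mathrm{trace}\{\boldsymbol v_2^{-1}(\boldsymbol\beta_2)\}$ is the asymptotic MSE of the target MLE $\widehat{\boldsymbol\beta}_2$. Then: (i) for each $n_2$ there is $\lambda_0>0$ such that $\mathrm{aMSE}(\lambda)<\mathrm{aMSE}(0)$ for all $\lambda\in(0,\lambda_0)$; if $\boldsymbol X_1\boldsymbol\Delta(\boldsymbol\beta_2)=\boldsymbol 0$ this holds for all $\lambda>0$; (ii) if $\boldsymbol X_1\boldsymbol\Delta(\boldsymbol\beta_2)\neq\boldsymbol 0$, then, with $\boldsymbol v_1,\boldsymbol v_2,d(\gamma_2),\boldsymbol X_1,\boldsymbol\Delta(\boldsymbol\beta_2)$ held fixed, there is a constant $C$ such that for all sufficiently large $n_2$ every $\lambda>0$ with $\mathrm{aMSE}(\lambda)\le\mathrm{aMSE}(0)$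 satisfies $\lambda\le Cn_2^{-1/2}$; that is, the range of $\lambda>0$ on which the asymptotic MSE of $\widetilde{\boldsymbol\beta}_2(\lambda)$ is below that of $\widehat{\boldsymbol\beta}_2$ has upper limit $O(n_2^{-1/2})$.
   Context: GLM setting. Fix $p\ge1$, an open convex $\Theta\subseteq\mathbb{R}^p$, known $b,c,d$ with $b$ twice differentiable, $b''>0$, $h=b'$. Source (fixed): $n_1$, $\boldsymbol X_1=(\boldsymbol X_{11},\dots,\boldsymbol X_{n_11})\in\mathbb{R}^{p\times n_1}$, fixed $\widehat{\boldsymbol\beta}_1$. Target: deterministic $\boldsymbol X_{i2}$, $\boldsymbol X_2=(\boldsymbol X_{12},\dots,\boldsymbol X_{n_22})$, independent $y_{i2}$ with density $c(y;\gamma_2)\exp[d(\gamma_2)^{-1}\{y\boldsymbol X_{i2}^\top\boldsymbol\beta_2-b(\boldsymbol X_{i2}^\top\boldsymbol\beta_2)\}]$, true $\boldsymbol\beta_2\in\Theta$. Estimator $\widetilde{\boldsymbol\beta}_2(\lambda)=\arg\max_{\boldsymbol\beta}O(\boldsymbol\beta;\lambda)$ with $O(\boldsymbol\beta;\lambda)=n_2^{-1}\sum_{i=1}^{n_2}\{y_{i2}\boldsymbol X_{i2}^\top\boldsymbol\beta-b(\boldsymbol X_{i2}^\top\boldsymbol\beta)\}-\lambda n_1^{-1}\sum_{i=1}^{n_1}\{h(\boldsymbol X_{i1}^\top\widehat{\boldsymbol\beta}_1)(\boldsymbol X_{i1}^\top\widehat{\boldsymbol\beta}_1-\boldsymbol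 X_{i1}^\top\boldsymbol\beta)+b(\boldsymbol X_{i1}^\top\boldsymbol\beta)-b(\boldsymbol X_{i1}^\top\widehat{\boldsymbol\beta}_1)\}$; $\boldsymbol\beta_2^\star(\lambda)$ the unique maximizer of $\lim_{n_2\to\infty}\mathbb{E}O(\boldsymbol\beta;\lambda)$. Notation: $\boldsymbol A(\boldsymbol X_j^\top\boldsymbol\beta)=\mathrm{diag}\{b''(\boldsymbol X_{ij}^\top\boldsymbol\beta)\}_{i=1}^{n_j}$; $\boldsymbol\Delta(\boldsymbol\beta)=\{h(\boldsymbol X_{i1}^\top\boldsymbol\beta)-h(\boldsymbol X_{i1}^\top\widehat{\boldsymbol\beta}_1)\}_{i=1}^{n_1}$; $\boldsymbol v_1(\boldsymbol\beta)=n_1^{-1}\boldsymbol X_1\boldsymbol A(\boldsymbol X_1^\top\boldsymbol\beta)\boldsymbol X_1^\top$; $\boldsymbol v_2(\boldsymbol\beta)=\lim_{n_2\to\infty}n_2^{-1}\boldsymbol X_2\boldsymbol A(\boldsymbol X_2^\top\boldsymbol\beta)\boldsymbol X_2^\top$. Condition (C1): for each $\boldsymbol\beta$, $\lim_{n_2\to\infty}n_2^{-1}\sum_{i=1}^{n_2}\{h(\boldsymbol X_{i2}^\top\boldsymbol\beta_2)\boldsymbol X_{i2}^\top\boldsymbol\beta-b(\boldsymbol X_{i2}^\top\boldsymbol\beta)\}$ exists and is finite. Condition (C2): for every $\boldsymbol\beta$ between $\boldsymbol\beta_2$ and $\boldsymbol\beta_2^\star(\lambda)$ inclusive, $\boldsymbol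 v_1(\boldsymbol\beta)$ and $\boldsymbol v_2(\boldsymbol\beta)$ exist and are positive definite. *)

From HB Require Import structures.
From mathcomp Require Import all_boot all_order all_algebra.
From mathcomp Require Import all_classical all_reals all_analysis.
Set Implicit Arguments. Unset Strict Implicit. Unset Printing Implicit Defensive.
Import Order.TTheory GRing.Theory Num.Theory.
Import numFieldNormedType.Exports.
Local Open Scope ring_scope.
Local Open Scope classical_set_scope.

Definition posdef {R : realType} (p : nat) (A : 'M[R]_p) : Prop :=
  A^T = A /\ forall x : 'cV[R]_p, x != 0 -> 0 < (x^T *m A *m x) 0 0.

Definition glm_open {R : realType} (p : nat) (Theta : set 'cV[R]_p) : Prop :=
  forall x, Theta x -> exists2 e : R, 0 < e &
    forall y : 'cV[R]_p, (forall i, `|y i 0 - x i 0| < e) -> Theta y.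
Definition glm_convex {R : realType} (p : nat) (Theta : set 'cV[R]_p) : Prop :=
  forall x y t, Theta x -> Theta y -> 0 <= t <= 1 ->
    Theta (t *: x + (1 - t) *: y).

Definition twice_diff {R : realType} (b : R -> R) : Prop :=
  forall x, derivable b x 1 /\ derivable b^`() x 1.

Definition glm_h {R : realType} (b : R -> R) : R -> R := b^`().
Definition glm_b2 {R : realType} (b : R -> R) : R -> R := b^`()^`().

Definition Amat {R : realType} (b : R -> R) (p n : nat)
  (X : 'M[R]_(p, n)) (beta : 'cV[R]_p) : 'M[R]_n :=
  diag_mx (\row_i glm_b2 b ((X^T *m beta) i 0)).

Definition v1 {R : realType} (b : R -> R) (p n1 : nat)
  (X1 : 'M[R]_(p, n1)) (beta : 'cV[R]_p) : 'M[R]_p :=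
  n1%:R^-1 *: (X1 *m Amat b X1 beta *m X1^T).

(* X_2 = (X_{12},...,X_{n2}) built from the (infinite) target design *)
Definition Xmat {R : realType} (p : nat) (X2 : nat -> 'cV[R]_p) (n : nat)
  : 'M[R]_(p, n) := \matrix_(i < p, j < n) X2 j i 0.

Definition v2seq {R : realType} (b : R -> R) (p : nat)
  (X2 : nat -> 'cV[R]_p) (beta : 'cV[R]_p) (n : nat) : 'M[R]_p :=
  n%:R^-1 *: (Xmat X2 n *m Amat b (Xmat X2 n) beta *m (Xmat X2 n)^T).

Definition v2_has_limit {R : realType} (b : R -> R) (p : nat)
  (X2 : nat -> 'cV[R]_p) (beta : 'cV[R]_p) (V : 'M[R]_p) : Prop :=
  forall i j, (fun n => v2seq b X2 beta n i j) @ \oo --> V i j.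

Definition v2 {R : realType} (b : R -> R) (p : nat)
  (X2 : nat -> 'cV[R]_p) (beta : 'cV[R]_p) : 'M[R]_p :=
  \matrix_(i, j) limn (fun n => v2seq b X2 beta n i j).

Definition Delta {R : realType} (b : R -> R) (p n1 : nat)
  (X1 : 'M[R]_(p, n1)) (bhat1 beta : 'cV[R]_p) : 'cV[R]_n1 :=
  \col_i (glm_h b ((X1^T *m beta) i 0) - glm_h b ((X1^T *m bhat1) i 0)).

(* expected target log-likelihood part (E y_{i2} = h(X_{i2}^T beta2)) *)
Definition C1seq {R : realType} (b : R -> R) (p : nat)
  (X2 : nat -> 'cV[R]_p) (beta2 beta : 'cV[R]_p) (n : nat) : R :=
  n%:R^-1 * \sum_(i < n)
    (glm_h b (((X2 i)^T *m beta2) 0 0) * ((X2 i)^T *m beta) 0 0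
     - b (((X2 i)^T *m beta) 0 0)).

Definition penalty {R : realType} (b : R -> R) (p n1 : nat)
  (X1 : 'M[R]_(p, n1)) (bhat1 beta : 'cV[R]_p) : R :=
  n1%:R^-1 * \sum_(i < n1)
    (glm_h b ((X1^T *m bhat1) i 0) * ((X1^T *m bhat1) i 0 - (X1^T *m beta) i 0)
     + b ((X1^T *m beta) i 0) - b ((X1^T *m bhat1) i 0)).

Definition Olim {R : realType} (b : R -> R) (p n1 : nat)
  (X1 : 'M[R]_(p, n1)) (bhat1 : 'cV[R]_p) (X2 : nat -> 'cV[R]_p)
  (beta2 : 'cV[R]_p) (lam : R) (beta : 'cV[R]_p) : R :=
  limn (C1seq b X2 beta2 beta) - lam * penalty b X1 bhat1 beta.

Definition aMSE {R : realType} (p n1 : nat) (dg : R) (V1 V2 : 'M[R]_p)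
  (X1 : 'M[R]_(p, n1)) (Del : 'cV[R]_n1) (n2 : nat) (lam : R) : R :=
  let s := V2 + lam *: V1 in
  let s2i := invmx s *m invmx s in
  dg * \tr (s2i *m V2)
  + n2%:R * lam ^+ 2 * (n1%:R ^+ 2)^-1
    * (Del^T *m X1^T *m s2i *m X1 *m Del) 0 0.

From HB Require Import structures.
From mathcomp Require Import all_boot all_order all_algebra.
From mathcomp Require Import all_classical all_reals all_analysis.
From mathcomp Require Import ring lra.
Import Order.TTheory GRing.Theory Num.Theory.
Import numFieldNormedType.Exports.
Local Open Scope ring_scope.
Local Open Scope classical_set_scope.

(* With s = V2 + lam V1 and P = s^-1 one has the exact identity
   V2^-1 = P V2 P + 2 lam P V1 P + lam^2 P V1 V2^-1 V1 P,
   so aMSE(0) - aMSE(lam) = d (2 lam tr(P V1 P) + lam^2 tr(P V1 V2^-1 V1 P))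
                            - n2 lam^2 n1^-2 |P X1 Delta|^2.
   The variance gain is linear in lam with positive slope, while the bias term is
   quadratic in lam and, since |P w|^2 <= tr(V1^-1) tr(P V1 P) |w|^2, it is
   dominated by the gain for small lam; this gives (i).  For (ii) the gain never
   exceeds d tr(V2^-1), whereas w = X1 Delta = V2 P w + lam V1 P w bounds
   |w|^2 <= 2 (|V2|_F^2 + lam^2 |V1|_F^2) |P w|^2; together these force
   n2 lam^2 = O(1) once n2 is large. *)

Section QuadraticForms.
Context {R : realType} {p : nat}.
Implicit Types (M A : 'M[R]_p) (x y z : 'cV[R]_p).

Definition bform M x y : R := (x^T *m M *m y) 0 0.
Definition qform M x : R := bform M x x.
Definition sqnorm {m} (x : 'cV[R]_m) : R := (x^T *m x) 0 0.
Definition frob2 {m} (A : 'M[R]_(m, p)) : R := \sum_i \sum_j A i j ^+ 2.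

Lemma sqnormE {m} (x : 'cV[R]_m) : sqnorm x = \sum_i x i 0 ^+ 2.
Proof. by rewrite /sqnorm mxE; apply: eq_bigr => i _; rewrite mxE expr2. Qed.

Lemma sqnorm_ge0 {m} (x : 'cV[R]_m) : 0 <= sqnorm x.
Proof. by rewrite sqnormE; apply: sumr_ge0 => i _; apply: sqr_ge0. Qed.

Lemma sqnormZ {m} (t : R) (x : 'cV[R]_m) : sqnorm (t *: x) = t ^+ 2 * sqnorm x.
Proof.
by rewrite !sqnormE mulr_sumr; apply: eq_bigr => i _; rewrite mxE exprMn.
Qed.

Lemma sqnormD_le {m} (x y : 'cV[R]_m) : sqnorm (x + y) <= 2 * sqnorm x + 2 * sqnorm y.
Proof.
rewrite !sqnormE !mulr_sumr -big_split /=; apply: ler_sum => i _.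
rewrite mxE; have := sqr_ge0 (x i 0 - y i 0); rewrite !expr2; nra.
Qed.

Lemma qform1 x : qform 1%:M x = sqnorm x.
Proof. by rewrite /qform /bform mulmx1. Qed.

Lemma bformC M x y : M^T = M -> bform M x y = bform M y x.
Proof.
move=> sM; rewrite /bform; transitivity ((x^T *m M *m y)^T 0 0).
  by rewrite [RHS]mxE.
by rewrite !trmx_mul trmxK sM mulmxA.
Qed.

Lemma qformDZr M x y (t : R) :
  qform M (x + t *: y) = qform M x + t * (bform M x y + bform M y x) + t ^+ 2 * qform M y.
Proof.
rewrite /qform /bform.
have -> : (x + t *: y)^T = x^T + t *: y^T by rewrite linearD linearZ.
rewrite !(mulmxDl, mulmxDr) -!scalemxAl -!scalemxAr !mxE expr2; lra.
Qed.

Lemma qformDZl M A (t : R) x : qform (M + t *: A) x = qform M x + t * qform A x.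
Proof. by rewrite /qform /bform mulmxDr mulmxDl -scalemxAr -scalemxAl !mxE. Qed.

Lemma qform_mulmx M A x : qform (A^T *m M *m A) x = qform M (A *m x).
Proof. by rewrite /qform /bform trmx_mul !mulmxA. Qed.

Lemma qform_delta M i : qform M (delta_mx i 0) = M i i.
Proof. by rewrite /qform /bform trmx_delta -rowE -colE !mxE. Qed.

Lemma mxtraceE_qform M : \tr M = \sum_i qform M (delta_mx i 0).
Proof. by apply: eq_bigr => i _; rewrite qform_delta. Qed.

Lemma mxtrace_ge0 M : (forall x, 0 <= qform M x) -> 0 <= \tr M.
Proof. by move=> M_ge0; rewrite mxtraceE_qform; apply: sumr_ge0. Qed.

Lemma delta_mx_neq0 (i : 'I_p) : delta_mx i 0 != 0 :> 'cV[R]_p.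
Proof. by apply/eqP => /matrixP /(_ i 0); rewrite !mxE !eqxx => /eqP; rewrite oner_eq0. Qed.

Lemma mxtrace_gt0 M : (0 < p)%N -> (forall x, x != 0 -> 0 < qform M x) -> 0 < \tr M.
Proof.
move=> p_gt0 M_gt0; rewrite mxtraceE_qform (bigD1 (Ordinal p_gt0)) //=.
apply: ltr_wpDr; last exact/M_gt0/delta_mx_neq0.
by apply: sumr_ge0 => i _; apply/ltW/M_gt0/delta_mx_neq0.
Qed.

Lemma posdef_qform_ge0 M x : posdef M -> 0 <= qform M x.
Proof.
case=> _ M_gt0; have [->|x0] := eqVneq x 0; last exact/ltW/M_gt0.
by rewrite /qform /bform mulmx0 mxE.
Qed.

Lemma posdef_bform_sqr_le M x y : posdef M -> bform M x y ^+ 2 <= qform M x * qform M y.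
Proof.
move=> pdM; have qx_ge0 : 0 <= qform M x by exact: posdef_qform_ge0.
have [->|y0] := eqVneq y 0.
  by rewrite /qform /bform !mulmx0 mxE expr2 mul0r mulr0.
have qy_gt0 : 0 < qform M y by case: pdM => _; apply.
have bC := bformC M x y (proj1 pdM).
(* minimise the quadratic [t |-> qform M (x + t *: y)] *)
have := posdef_qform_ge0 M (x + (- bform M x y / qform M y) *: y) pdM.
rewrite qformDZr -bC; set b := bform M x y; set q := qform M y.
have -> : qform M x + - b / q * (b + b) + (- b / q) ^+ 2 * q = qform M x - b ^+ 2 / q.
  by field; rewrite gt_eqF.
by rewrite subr_ge0 ler_pdivrMr.
Qed.

Lemma posdef_unitmx M : posdef M -> M \in unitmx.
Proof.
case=> _ M_gt0; rewrite unitmxE unitfE; apply/negP => /det0P [v v0 vM0].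
have vT0 : v^T != 0 by rewrite trmx_eq0.
by have := M_gt0 _ vT0; rewrite trmxK vM0 mul0mx mxE ltxx.
Qed.

Lemma posdef1 : posdef (1%:M : 'M[R]_p).
Proof.
split=> [|x x0]; first by rewrite trmx1.
change (0 < qform 1%:M x); rewrite qform1 sqnormE.
have [i xi0] : exists i, x i 0 != 0.
  apply/existsP; apply: contraR x0; rewrite negb_exists => /forallP x_eq0.
  by apply/eqP/matrixP => i j; rewrite (ord1 j) mxE; apply/eqP/negbNE/x_eq0.
rewrite (bigD1 i) //=; apply: ltr_pwDl; first by rewrite exprn_even_gt0.
by apply: sumr_ge0 => j _; apply: sqr_ge0.
Qed.

Lemma posdef_trmx_invmx M : posdef M -> (invmx M)^T = invmx M.
Proof. by case=> sM _; rewrite trmx_inv sM. Qed.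

Lemma posdef_invmx M : posdef M -> posdef (invmx M).
Proof.
move=> pdM; have Mu := posdef_unitmx _ pdM; have sMi := posdef_trmx_invmx _ pdM.
split=> // x x0.
have -> : x^T *m invmx M *m x = (invmx M *m x)^T *m M *m (invmx M *m x).
  by rewrite trmx_mul sMi -!mulmxA mulKmx.
apply: (proj2 pdM).
by apply: contra x0 => /eqP Mix0; rewrite -(mulKVmx Mu x) Mix0 mulmx0.
Qed.

Lemma posdefD_scale M A (t : R) : posdef M -> posdef A -> 0 <= t -> posdef (M + t *: A).
Proof.
move=> pdM pdA t_ge0; split.
  by rewrite linearD linearZ /= (proj1 pdM) (proj1 pdA).
move=> x x0; change (0 < qform (M + t *: A) x).
rewrite qformDZl; apply: ltr_pwDl; last first.
  exact: mulr_ge0 (posdef_qform_ge0 _ _ pdA).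
exact: (proj2 pdM).
Qed.

Lemma frob2_ge0 {m} (A : 'M[R]_(m, p)) : 0 <= frob2 A.
Proof. by apply: sumr_ge0 => i _; apply: sumr_ge0 => j _; apply: sqr_ge0. Qed.

Lemma sqnorm_mulmx_le {m} (A : 'M[R]_(m, p)) z : sqnorm (A *m z) <= frob2 A * sqnorm z.
Proof.
rewrite sqnormE /frob2 mulr_suml; apply: ler_sum => i _.
have -> : (A *m z) i 0 = bform 1%:M (row i A)^T z.
  by rewrite /bform mulmx1 trmxK -row_mul [RHS]mxE.
have -> : \sum_j A i j ^+ 2 = qform 1%:M (row i A)^T.
  by rewrite qform1 sqnormE; apply: eq_bigr => j _; rewrite !mxE.
by rewrite -qform1; apply: posdef_bform_sqr_le posdef1.
Qed.

Lemma sqnorm_le_mxtrace_invmx M y : posdef M -> sqnorm y <= \tr (invmx M) * qform M y.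
Proof.
move=> pdM; have Mu := posdef_unitmx _ pdM; have sMi := posdef_trmx_invmx _ pdM.
rewrite sqnormE /mxtrace mulr_suml; apply: ler_sum => i _.
have -> : y i 0 = bform M (invmx M *m delta_mx i 0) y.
  rewrite /bform trmx_mul sMi trmx_delta -(mulmxA _ (invmx M) M) mulVmx //.
  by rewrite mulmx1 -rowE [RHS]mxE.
have -> : invmx M i i = qform M (invmx M *m delta_mx i 0).
  by rewrite -qform_mulmx sMi -mulmxA mulmxV // mulmx1 qform_delta.
exact: posdef_bform_sqr_le.
Qed.

Lemma mxtrace_invmx_ge0 M : posdef M -> 0 <= \tr (invmx M).
Proof. by move=> pdM; apply: mxtrace_ge0 => x; apply/posdef_qform_ge0/posdef_invmx. Qed.

Lemma frob2_le_mxtrace M A : posdef M -> frob2 A <= \tr (invmx M) * \tr (A^T *m M *m A).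
Proof.
move=> pdM; rewrite /frob2 exchange_big [\tr (_ *m A)]mxtraceE_qform mulr_sumr.
apply: ler_sum => j _; rewrite qform_mulmx -colE.
have -> : \sum_i A i j ^+ 2 = sqnorm (col j A).
  by rewrite sqnormE; apply: eq_bigr => i _; rewrite mxE.
exact: sqnorm_le_mxtrace_invmx.
Qed.
End QuadraticForms.

Definition resolvent {R : realType} {p : nat} (V1 V2 : 'M[R]_p) (l : R) : 'M[R]_p :=
  invmx (V2 + l *: V1).

Lemma aMSE_resolventE {R : realType} {p n1 : nat} (dg : R) (V1 V2 : 'M[R]_p)
    (X1 : 'M[R]_(p, n1)) Del n2 l :
  (resolvent V1 V2 l)^T = resolvent V1 V2 l ->
  aMSE dg V1 V2 X1 Del n2 l =
  dg * \tr (resolvent V1 V2 l *m V2 *m resolvent V1 V2 l)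
  + n2%:R * l ^+ 2 * (n1%:R ^+ 2)^-1 * sqnorm (resolvent V1 V2 l *m (X1 *m Del)).
Proof.
rewrite /aMSE /sqnorm -/(resolvent V1 V2 l); set P := resolvent V1 V2 l => sP.
congr (_ * _ + _ * _); first by rewrite -mulmxA mxtrace_mulC.
by rewrite trmx_mul sP trmx_mul !mulmxA.
Qed.

Section Resolvent.
Context {R : realType} {p : nat} {V1 V2 : 'M[R]_p} {l : R}.
Hypotheses (pdV1 : posdef V1) (pdV2 : posdef V2) (l_ge0 : 0 <= l).

Local Notation P := (resolvent V1 V2 l).

Lemma resolvent_unitmx : V2 + l *: V1 \in unitmx.
Proof. exact/posdef_unitmx/posdefD_scale. Qed.

Lemma trmx_resolvent : P^T = P.
Proof. exact/posdef_trmx_invmx/posdefD_scale. Qed.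

(* Expand [V2^-1 = P S V2^-1 S P] with [S = V2 + l V1]. *)
Lemma invmx_resolvent_split :
  invmx V2 = P *m V2 *m P + (2 * l) *: (P *m V1 *m P)
             + l ^+ 2 *: (P *m V1 *m invmx V2 *m V1 *m P).
Proof.
have V2u := posdef_unitmx _ pdV2; have Su := resolvent_unitmx.
have SV2S : (V2 + l *: V1) *m invmx V2 *m (V2 + l *: V1) =
            V2 + (2 * l) *: V1 + l ^+ 2 *: (V1 *m invmx V2 *m V1).
  rewrite !(mulmxDl, mulmxDr) -!scalemxAl -!scalemxAr mulmxV // mul1mx.
  rewrite -mulmxA mulVmx // mulmx1 scalerA -expr2 mulrDl mul1r scalerDl !addrA.
  by rewrite mul1mx.
have PSV2SP : P *m ((V2 + l *: V1) *m invmx V2 *m (V2 + l *: V1)) *m P = invmx V2.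
  by rewrite /resolvent !mulmxA mulVmx // mul1mx -mulmxA mulmxV // mulmx1.
by rewrite -{1}PSV2SP SV2S !(mulmxDl, mulmxDr) -?scalemxAr -?scalemxAl !mulmxA.
Qed.

Lemma mxtrace_resolvent_V1_gt0 : (0 < p)%N -> 0 < \tr (P *m V1 *m P).
Proof.
move=> p_gt0; apply: mxtrace_gt0 => // x x0.
rewrite -{1}trmx_resolvent qform_mulmx; apply: (proj2 pdV1).
apply: contra x0 => /eqP Px0.
by rewrite -(mulKVmx resolvent_unitmx x) -/(resolvent V1 V2 l) Px0 mulmx0.
Qed.

Lemma resolvent_gain_le_mxtrace_invmx :
  2 * l * \tr (P *m V1 *m P) + l ^+ 2 * \tr (P *m V1 *m invmx V2 *m V1 *m P)
  <= \tr (invmx V2).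
Proof.
have PV2P_ge0 : 0 <= \tr (P *m V2 *m P).
  apply: mxtrace_ge0 => x; rewrite -{1}trmx_resolvent qform_mulmx.
  exact: posdef_qform_ge0.
by rewrite {2}invmx_resolvent_split !mxtraceD !mxtraceZ -addrA lerDr.
Qed.

Lemma mxtrace_resolvent_V1_invV2_ge0 : 0 <= \tr (P *m V1 *m invmx V2 *m V1 *m P).
Proof.
apply: mxtrace_ge0 => x.
have -> : P *m V1 *m invmx V2 *m V1 *m P = (V1 *m P)^T *m invmx V2 *m (V1 *m P).
  by rewrite trmx_mul trmx_resolvent (proj1 pdV1) !mulmxA.
by rewrite qform_mulmx; apply/posdef_qform_ge0/posdef_invmx.
Qed.

Lemma sqnorm_resolvent_le w :
  sqnorm (P *m w) <= \tr (invmx V1) * \tr (P *m V1 *m P) * sqnorm w.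
Proof.
apply: le_trans (sqnorm_mulmx_le P w) _; apply: ler_wpM2r; first exact: sqnorm_ge0.
by rewrite -{2}trmx_resolvent; apply: frob2_le_mxtrace.
Qed.

Lemma sqnorm_le_resolvent w :
  sqnorm w <= 2 * (frob2 V2 + l ^+ 2 * frob2 V1) * sqnorm (P *m w).
Proof.
have w_split : V2 *m (P *m w) + l *: (V1 *m (P *m w)) = w.
  by rewrite scalemxAl -mulmxDl mulmxA mulmxV ?mul1mx //; apply: resolvent_unitmx.
rewrite -{1}w_split; apply: le_trans (sqnormD_le _ _) _; rewrite sqnormZ.
have := sqnorm_mulmx_le V2 (P *m w).
have := ler_wpM2l (sqr_ge0 l) (sqnorm_mulmx_le V1 (P *m w)); lra.
Qed.

Lemma aMSE_gapE dg n1 (X1 : 'M[R]_(p, n1)) Del n2 :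
  aMSE dg V1 V2 X1 Del n2 0 - aMSE dg V1 V2 X1 Del n2 l =
  dg * (2 * l * \tr (P *m V1 *m P) + l ^+ 2 * \tr (P *m V1 *m invmx V2 *m V1 *m P))
  - n2%:R * l ^+ 2 * (n1%:R ^+ 2)^-1 * sqnorm (P *m (X1 *m Del)).
Proof.
have P0 : resolvent V1 V2 0 = invmx V2 by rewrite /resolvent scale0r addr0.
rewrite (aMSE_resolventE _ _ _ _ _ _ _ trmx_resolvent) aMSE_resolventE; last first.
  by rewrite P0; apply: posdef_trmx_invmx.
rewrite P0 mulVmx ?posdef_unitmx // mul1mx {1}invmx_resolvent_split.
rewrite !mxtraceD !mxtraceZ expr0n /=; ring.
Qed.
End Resolvent.

Lemma le_sqrt_div_sqrt {R : realType} (c n l : R) :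
  0 < n -> 0 <= l -> n * l ^+ 2 <= c -> l <= Num.sqrt c * (Num.sqrt n)^-1.
Proof.
move=> n_gt0 l_ge0 nl2_le; rewrite ler_pdivlMr ?sqrtr_gt0 //.
have c_ge0 : 0 <= c by apply: le_trans nl2_le; rewrite mulr_ge0 ?sqr_ge0 ?ltW.
by rewrite -(ger0_norm l_ge0) -sqrtr_sqr -sqrtrM ?sqr_ge0 // ler_sqrt // mulrC.
Qed.

Section ShrinkageGain.
Context {R : realType} {p n1 : nat} (dg : R) (V1 V2 : 'M[R]_p)
  (X1 : 'M[R]_(p, n1)) (Del : 'cV[R]_n1).
Hypotheses (p_gt0 : (0 < p)%N) (dg_gt0 : 0 < dg) (pdV1 : posdef V1) (pdV2 : posdef V2).

Local Notation aM n2 := (aMSE dg V1 V2 X1 Del n2).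
Local Notation c := ((n1%:R ^+ 2)^-1 : R).

Let c_ge0 : 0 <= c. Proof. by rewrite invr_ge0 exprn_ge0. Qed.

Lemma aMSE_lt_aMSE0 n2 l :
  0 < l -> l * (n2%:R * c * \tr (invmx V1) * sqnorm (X1 *m Del)) < 2 * dg ->
  aM n2 l < aM n2 0.
Proof.
move=> l_gt0 l_small; have l_ge0 := ltW l_gt0.
rewrite -subr_gt0 (aMSE_gapE pdV1 pdV2 l_ge0).
set TN := \tr (_ *m V1 *m _); set TQ := \tr (_ *m invmx V2 *m _ *m _).
have TN_gt0 : 0 < TN := mxtrace_resolvent_V1_gt0 pdV1 pdV2 l_ge0 p_gt0.
have TQ_ge0 : 0 <= TQ := mxtrace_resolvent_V1_invV2_ge0 pdV1 pdV2 l_ge0.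
have q_le := sqnorm_resolvent_le pdV1 pdV2 l_ge0 (X1 *m Del).
have nlc_ge0 : 0 <= n2%:R * l ^+ 2 * c by rewrite !mulr_ge0 ?sqr_ge0.
have penalty_lt : n2%:R * l ^+ 2 * c * sqnorm (resolvent V1 V2 l *m (X1 *m Del))
                  < dg * (2 * l * TN).
  apply: le_lt_trans (ler_wpM2l nlc_ge0 q_le) _.
  have -> : n2%:R * l ^+ 2 * c * (\tr (invmx V1) * TN * sqnorm (X1 *m Del))
          = (l * TN) * (l * (n2%:R * c * \tr (invmx V1) * sqnorm (X1 *m Del))) by ring.
  have -> : dg * (2 * l * TN) = (l * TN) * (2 * dg) by ring.
  by rewrite ltr_pM2l ?mulr_gt0.
have := mulr_ge0 (ltW dg_gt0) (mulr_ge0 (sqr_ge0 l) TQ_ge0).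
lra.
Qed.

Lemma aMSE_improves_near0 n2 :
  exists2 lam0 : R, 0 < lam0 & forall l, 0 < l < lam0 -> aM n2 l < aM n2 0.
Proof.
set K := n2%:R * c * \tr (invmx V1) * sqnorm (X1 *m Del).
have K_ge0 : 0 <= K by rewrite !mulr_ge0 ?sqnorm_ge0 ?mxtrace_invmx_ge0.
exists (dg / (K + 1)) => [|l /andP [l_gt0 l_lt]]; first by rewrite divr_gt0 ?ltr_wpDl.
apply: aMSE_lt_aMSE0 => //; change (l * K < 2 * dg).
rewrite ltr_pdivlMr ?ltr_wpDl // in l_lt; nra.
Qed.

Lemma aMSE_improves_everywhere n2 :
  X1 *m Del = 0 -> forall l, 0 < l -> aM n2 l < aM n2 0.
Proof.
move=> XDel0 l l_gt0; apply: aMSE_lt_aMSE0 => //.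
by rewrite XDel0 /sqnorm mulmx0 mxE !mulr0 mulr_gt0.
Qed.

Hypothesis n1_gt0 : (0 < n1)%N.

Lemma aMSE_improvement_range :
  X1 *m Del != 0 ->
  exists C : R, exists N : nat, forall n2 : nat, (N <= n2)%N ->
    forall l : R, 0 < l -> aM n2 l <= aM n2 0 -> l <= C * (Num.sqrt n2%:R)^-1.
Proof.
move=> XDel0; set W := sqnorm (X1 *m Del).
have W_gt0 : 0 < W by rewrite /W -qform1; apply: (proj2 posdef1).
have k_gt0 : 0 < c * W by rewrite mulr_gt0 // invr_gt0 exprn_gt0 // ltr0n.
set B := dg * \tr (invmx V2).
have B_ge0 : 0 <= B by rewrite mulr_ge0 ?(ltW dg_gt0) ?mxtrace_invmx_ge0.
set F1 := frob2 V1; set F2 := frob2 V2.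
have F1_ge0 : 0 <= F1 := frob2_ge0 V1; have F2_ge0 : 0 <= F2 := frob2_ge0 V2.
exists (Num.sqrt (4 * F2 * B / (c * W))), (Num.truncn (4 * F1 * B / (c * W))).+1.
move=> n2 n2_large l l_gt0 l_le; have l_ge0 := ltW l_gt0; set n := n2%:R : R.
have n_large : 4 * F1 * B <= n * (c * W).
  rewrite -ler_pdivrMr //; apply/ltW/(lt_le_trans (truncnS_gt _)).
  by rewrite ler_nat.
have n_gt0 : 0 < n by rewrite ltr0n (leq_trans _ n2_large).
apply: le_sqrt_div_sqrt => //; rewrite ler_pdivlMr //.
set q := sqnorm (resolvent V1 V2 l *m (X1 *m Del)).
have penalty_le : n * l ^+ 2 * c * q <= B.
  move: l_le; rewrite -subr_ge0 (aMSE_gapE pdV1 pdV2 l_ge0) subr_ge0 => /le_trans.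
  by apply; rewrite ler_pM2l // (resolvent_gain_le_mxtrace_invmx pdV1 pdV2 l_ge0).
have W_le : W <= 2 * (F2 + l ^+ 2 * F1) * q := sqnorm_le_resolvent pdV1 pdV2 l_ge0 _.
have nl2c_ge0 : 0 <= n * l ^+ 2 * c by rewrite !mulr_ge0 ?sqr_ge0 ?(ltW n_gt0).
have : n * l ^+ 2 * (c * W) <= 2 * (F2 + l ^+ 2 * F1) * B.
  rewrite mulrA; apply: le_trans (ler_wpM2l nl2c_ge0 W_le) _.
  rewrite mulrCA ler_wpM2l //.
  by rewrite mulr_ge0 // addr_ge0 // mulr_ge0 // sqr_ge0.
have := ler_wpM2l (sqr_ge0 l) n_large; lra.
Qed.
End ShrinkageGain.

Theorem theorem2 (R : realType) (p n1 : nat) (Theta : set 'cV[R]_p)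
  (b d : R -> R) (gamma2 : R) (X1 : 'M[R]_(p, n1)) (bhat1 : 'cV[R]_p)
  (X2 : nat -> 'cV[R]_p) (beta2 : 'cV[R]_p) (bstar : R -> 'cV[R]_p) :
  (0 < p)%N -> (0 < n1)%N ->
  glm_open Theta -> glm_convex Theta -> Theta beta2 ->
  twice_diff b -> (forall x, 0 < glm_b2 b x) ->
  0 < d gamma2 ->
  (* (C1) *)
  (forall beta : 'cV[R]_p, exists l : R,
      C1seq b X2 beta2 beta @ \oo --> l) ->
  (* beta2*(lambda) is the unique maximizer over Theta of lim E O(.; lambda) *)
  (forall lam : R, 0 <= lam ->
      Theta (bstar lam) /\
      forall beta, Theta beta -> beta <> bstar lam ->
        Olim b X1 bhat1 X2 beta2 lam beta < Olim b X1 bhat1 X2 beta2 lam (bstar lam)) ->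
  (* (C2) *)
  (forall lam : R, 0 <= lam -> forall t : R, 0 <= t <= 1 ->
      let beta := (1 - t) *: beta2 + t *: bstar lam in
      posdef (v1 b X1 beta) /\
      exists V, v2_has_limit b X2 beta V /\ posdef V) ->
  let aM := aMSE (d gamma2) (v1 b X1 beta2) (v2 b X2 beta2) X1
                 (Delta b X1 bhat1 beta2) in
  (* (i) *)
  (forall n2 : nat,
     (exists2 lam0 : R, 0 < lam0 &
        forall lam : R, 0 < lam < lam0 -> aM n2 lam < aM n2 0) /\
     (X1 *m Delta b X1 bhat1 beta2 = 0 ->
        forall lam : R, 0 < lam -> aM n2 lam < aM n2 0)) /\
  (* (ii) *)
  (X1 *m Delta b X1 bhat1 beta2 != 0 ->
     exists C : R, exists N : nat, forall n2 : nat, (N <= n2)%N ->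
       forall lam : R, 0 < lam -> aM n2 lam <= aM n2 0 ->
         lam <= C * (Num.sqrt (n2%:R))^-1).
Proof.
(* Only (C2) at lam = 0, t = 0 matters: the aMSE is a function of v1, v2 at beta2. *)
move=> p_gt0 n1_gt0 _ _ _ _ _ dg_gt0 _ _ C2; rewrite /=.
have /= [pdV1 [V [V2_lim pdV2]]] := C2 0 (lexx 0) 0 (introT andP (conj (lexx 0) ler01)).
rewrite subr0 scale1r scale0r addr0 in pdV1 V2_lim.
have -> : v2 b X2 beta2 = V.
  by apply/matrixP => i j; rewrite mxE; apply: cvg_lim; last exact: V2_lim.
split=> [n2|]; first split.
- exact: aMSE_improves_near0.
- exact: aMSE_improves_everywhere.
- exact: aMSE_improvement_range.
Qed.
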